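(* Let $P\subseteq[0,1]^d$ be a $0/1$-polytope and let $\varepsilon\in(0,1)$, $M>0$ be such that every polyhedron $K\subseteq\mathbb{R}^d$ with $P^\uparrow\subseteq K\subseteq(1-\varepsilon)P^\uparrow$ satisfies $\operatorname{xc}(K)\geq M$. Then $P^\uparrow\cap[0,1]^d$ does not admit an $\frac{\varepsilon}{d}$-LEF of size less than $M-3d$.
   Context: $P^\uparrow:=P+\mathbb{R}^d_{\geq0}$. $\operatorname{xc}(K)$ is the minimum number of facets of a polyhedron $Q$ of which $K$ is an affine image. Relative distance: for convex $A\subseteq B\subseteq\mathbb{R}^d$, $\operatorname{rdist}(A,B)=\sup_{\pi}\frac{\sup_{b\in B}\inf_{a\in A}|\pi(b)-\pi(a)|}{\sup_{a,a'\in A}|\pi(a)-\pi(a')|}$ over linear $\pi:\mathbb{R}^d\to\mathbb{R}$ (denominator $\infty$ and $0/0$ read as $0$). An $\varepsilon$-LEF of a convex set $C\subseteq\mathbb{R}^d$ is a pair $(Q,\pi)$, $Q\subseteq\mathbb{R}^\ell$ a polyhedron, $\pi:\mathbb{R}^\ell\to\mathbb{R}^d$ affine, with $C\subseteq\pi(Q)$ and $\operatorname{rdist}(C,\pi(Q))\leq\varepsilon$; its size is the number of facets of $Q$. *)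

From HB Require Import structures.
From mathcomp Require Import all_boot all_order all_algebra.
From mathcomp Require Import boolp classical_sets reals constructive_ereal ereal.
Set Implicit Arguments. Unset Strict Implicit. Unset Printing Implicit Defensive.
Import Order.TTheory GRing.Theory Num.Theory.
Local Open Scope classical_set_scope.
Local Open Scope ring_scope.

Section Defs.
Variable R : realType.

(* the linear functional x |-> <c, x> ; every linear map R^d -> R is of this form *)
Definition dotv d (c x : 'rV[R]_d) : R := \sum_(i < d) c 0 i * x 0 i.

Definition zero_one_vec d (v : 'rV[R]_d) : Prop := forall i, v 0 i = 0 \/ v 0 i = 1.

Definition conv_hull d (V : seq 'rV[R]_d) : set 'rV[R]_d :=
  [set x | exists lam : 'I_(size V) -> R,
     (forall j, 0 <= lam j) /\ \sum_j lam j = 1 /\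
     x = \sum_(j < size V) lam j *: nth 0 V j].

Definition zero_one_polytope d (P : set 'rV[R]_d) : Prop :=
  exists V : seq 'rV[R]_d, (forall v, v \in V -> zero_one_vec v) /\ P = conv_hull V.

(* P^up = P + R^d_{>=0} *)
Definition up_hull d (P : set 'rV[R]_d) : set 'rV[R]_d :=
  [set x | exists2 p, P p & forall i, p 0 i <= x 0 i].

Definition scale_set d (a : R) (S : set 'rV[R]_d) : set 'rV[R]_d :=
  [set a *: x | x in S].

Definition unit_cube d : set 'rV[R]_d := [set x | forall i, 0 <= x 0 i <= 1].

Definition has_descr l (Q : set 'rV[R]_l) (m : nat) : Prop :=
  exists k (A : 'M[R]_(l, m)) (b : 'rV[R]_m) (E : 'M[R]_(l, k)) (e : 'rV[R]_k),
    Q = [set y | (forall i, (y *m A) 0 i <= b 0 i) /\ y *m E = e].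

Definition is_polyhedron l (Q : set 'rV[R]_l) : Prop := exists m, has_descr Q m.

(* Number of facets of a polyhedron Q: the minimal number of inequalities in a
   description of Q by linear inequalities and equations. *)
Definition num_facets l (Q : set 'rV[R]_l) : \bar R :=
  ereal_inf [set x | exists m, has_descr Q m /\ x = (m%:R)%:E].

Definition aff_image l d (T : 'M[R]_(l, d)) (t : 'rV[R]_d) (Q : set 'rV[R]_l)
  : set 'rV[R]_d := [set y *m T + t | y in Q].

Definition xc d (K : set 'rV[R]_d) : \bar R :=
  ereal_inf [set x | exists l (Q : set 'rV[R]_l) (T : 'M[R]_(l, d)) (t : 'rV[R]_d),
     is_polyhedron Q /\ K = aff_image T t Q /\ x = num_facets Q].

Definition rd_num d (A B : set 'rV[R]_d) (c : 'rV[R]_d) : \bar R :=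
  ereal_sup [set ereal_inf [set (`|dotv c b - dotv c a|)%:E | a in A] | b in B].

Definition rd_den d (A : set 'rV[R]_d) (c : 'rV[R]_d) : \bar R :=
  ereal_sup [set x | exists a a', A a /\ A a' /\ x = (`|dotv c a - dotv c a'|)%:E].

(* quotient with the conventions: denominator +oo -> 0, 0/0 -> 0, positive/0 -> +oo *)
Definition rd_ratio (num den : \bar R) : \bar R :=
  if den == +oo%E then 0%E
  else if den == 0%E then (if num == 0%E then 0%E else +oo%E)
  else (num * ((fine den)^-1)%:E)%E.

Definition rdist d (A B : set 'rV[R]_d) : \bar R :=
  ereal_sup [set rd_ratio (rd_num A B c) (rd_den A c) | c in [set: 'rV[R]_d]].

Definition is_LEF d (eps : R) (C : set 'rV[R]_d) l (Q : set 'rV[R]_l)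
  (T : 'M[R]_(l, d)) (t : 'rV[R]_d) : Prop :=
  is_polyhedron Q /\ C `<=` aff_image T t Q /\ (rdist C (aff_image T t Q) <= eps%:E)%E.

End Defs.

(* Let C = P^up ∩ [0,1]^d and let A = π(Q) be an (ε/d)-LEF of C. Adding to a
   description of Q the 2d inequalities saying π(y) ∈ [0,1]^d and the d inequalities
   z ≥ 0, the map (y, z) ↦ π(y) + z shows that K = (A ∩ [0,1]^d) + R^d_{≥0} has an
   extension with at most facets(Q) + 3d facets, and P^up ⊆ K because C ⊆ A.
   For K ⊆ (1-ε) P^up, suppose x ∈ A ∩ [0,1]^d while x/(1-ε) violates a valid
   inequality <c, ·> ≥ δ of P^up. Up-closedness forces c ≥ 0, and c' = min(c, δ) is
   still valid on the 0/1 vertices; on C the functional c' takes values in [δ, dδ], so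
   rdist(C, A) ≤ ε/d gives c'(x) ≥ (1-ε)δ, whereas
   c'(x) ≤ (1-ε) c(x/(1-ε)) < (1-ε)δ. Thus M ≤ xc K ≤ facets(Q) + 3d.
   That the sets involved are polyhedra rests on Fourier–Motzkin elimination. *)

From HB Require Import structures.
From mathcomp Require Import all_boot all_order all_algebra.
From mathcomp Require Import boolp classical_sets reals constructive_ereal ereal.
From mathcomp Require Import ring lra.
Set Implicit Arguments. Unset Strict Implicit. Unset Printing Implicit Defensive.
Import Order.TTheory GRing.Theory Num.Theory.
Local Open Scope classical_set_scope.
Local Open Scope ring_scope.

Section Dotv.
Variable R : realType.

Lemma dotvDr n (c x y : 'rV[R]_n) : dotv c (x + y) = dotv c x + dotv c y.
Proof. by rewrite /dotv -big_split; apply: eq_bigr => i _; rewrite mxE mulrDr. Qed.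

Lemma dotvDl n (c c' x : 'rV[R]_n) : dotv (c + c') x = dotv c x + dotv c' x.
Proof. by rewrite /dotv -big_split; apply: eq_bigr => i _; rewrite mxE mulrDl. Qed.

Lemma dotvZr n (c x : 'rV[R]_n) a : dotv c (a *: x) = a * dotv c x.
Proof. by rewrite /dotv mulr_sumr; apply: eq_bigr => i _; rewrite mxE mulrCA. Qed.

Lemma dotvZl n (c x : 'rV[R]_n) a : dotv (a *: c) x = a * dotv c x.
Proof. by rewrite /dotv mulr_sumr; apply: eq_bigr => i _; rewrite mxE mulrA. Qed.

Lemma dotvNl n (c x : 'rV[R]_n) : dotv (- c) x = - dotv c x.
Proof. by rewrite -scaleN1r dotvZl mulN1r. Qed.

Lemma dotv0r n (c : 'rV[R]_n) : dotv c 0 = 0.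
Proof. by rewrite /dotv big1 // => i _; rewrite mxE mulr0. Qed.

Lemma dotv_sumr n I (r : seq I) (P : pred I) (c : 'rV[R]_n) (F : I -> 'rV[R]_n) :
  dotv c (\sum_(i <- r | P i) F i) = \sum_(i <- r | P i) dotv c (F i).
Proof. exact: (big_morph _ (dotvDr c) (dotv0r c)). Qed.

Lemma dotv_row_mx n1 n2 (c1 x1 : 'rV[R]_n1) (c2 x2 : 'rV[R]_n2) :
  dotv (row_mx c1 c2) (row_mx x1 x2) = dotv c1 x1 + dotv c2 x2.
Proof.
by rewrite /dotv big_split_ord; congr (_ + _); apply: eq_bigr => i _;
  rewrite ?row_mxEl ?row_mxEr.
Qed.

Lemma dotv_deltar n (j : 'I_n) (c : 'rV[R]_n) : dotv c (delta_mx 0 j) = c 0 j.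
Proof.
rewrite /dotv (bigD1 j) //= big1 ?addr0 => [|i /negbTE nij]; rewrite mxE.
  by rewrite !eqxx mulr1.
by rewrite nij andbF mulr0.
Qed.

Definition colv l m (j : 'I_m) (A : 'M[R]_(l, m)) : 'rV[R]_l := \row_i A i j.

Lemma dotv_colv l m (j : 'I_m) (A : 'M[R]_(l, m)) y :
  dotv (colv j A) y = (y *m A) 0 j.
Proof. by rewrite /dotv !mxE; apply: eq_bigr => i _; rewrite mxE mulrC. Qed.

End Dotv.

Section FourierMotzkin.
Variable R : realType.

Definition sat n (s : seq ('rV[R]_n * R)) (x : 'rV[R]_n) :=
  forall p, p \in s -> dotv p.1 x <= p.2.

Definition hpolyhedron n (Q : set 'rV[R]_n) := exists s, Q = [set x | sat s x].

Lemma sat_cat n (s1 s2 : seq ('rV[R]_n * R)) x :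
  sat (s1 ++ s2) x <-> sat s1 x /\ sat s2 x.
Proof.
split=> [H|[H1 H2] p]; first by split=> p ps; apply: H; rewrite mem_cat ps ?orbT.
by rewrite mem_cat => /orP[]; [apply: H1|apply: H2].
Qed.

Lemma sat_map n (T : eqType) (f : T -> 'rV[R]_n * R) (s : seq T) x :
  sat (map f s) x <-> forall p, p \in s -> dotv (f p).1 x <= (f p).2.
Proof.
split=> [H p ps|H p /mapP[q qs ->]]; last exact: H.
by apply: H; apply: map_f.
Qed.

Lemma exists_between (L U : seq R) :
  (forall l u, l \in L -> u \in U -> l <= u) ->
  exists r, (forall l, l \in L -> l <= r) /\ (forall u, u \in U -> r <= u).
Proof.
elim: L => [|a L IH] LU.
  elim: U {LU} => [|b U [r [_ rU]]]; first by exists 0.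
  exists (Num.min b r); split => // u; rewrite inE => /orP[/eqP->|/rU ru].
    by rewrite ge_min lexx.
  by rewrite ge_min ru orbT.
have [|r [Lr rU]] := IH; first by move=> l u lL uU; apply: LU; rewrite // inE lL orbT.
exists (Num.max a r); split => [l|u uU].
  by rewrite inE le_max => /orP[/eqP->|/Lr->]; rewrite ?lexx ?orbT.
by rewrite ge_max rU // andbT; apply: LU; rewrite ?inE ?eqxx.
Qed.

(* For [p.1 0 j > 0 > q.1 0 j]: a nonnegative combination of [p] and [q]
   eliminating coordinate [j]. *)
Definition fm_combo n (j : 'I_n) (p q : 'rV[R]_n * R) : 'rV[R]_n * R :=
  ((- q.1 0 j) *: p.1 + p.1 0 j *: q.1, (- q.1 0 j) * p.2 + p.1 0 j * q.2).

Lemma fourier_motzkin_step n (s : seq ('rV[R]_n * R)) (j : 'I_n) :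
  exists s', forall x, sat s' x <-> exists r : R, sat s (x + r *: delta_mx 0 j).
Proof.
set Pos := [seq p : 'rV[R]_n * R <- s | 0 < p.1 0 j].
set Neg := [seq p : 'rV[R]_n * R <- s | p.1 0 j < 0].
exists ([seq p : 'rV[R]_n * R <- s | p.1 0 j == 0] ++
  [seq fm_combo j p q | p <- Pos, q <- Neg]) => x.
have dE c r : dotv c (x + r *: delta_mx 0 j) = dotv c x + r * c 0 j.
  by rewrite dotvDr dotvZr dotv_deltar.
split=> [/sat_cat [s0 sPN]|[r sr]]; last first.
  apply/sat_cat; split=> [p|_ /allpairsP [[p q] /= [pP qN ->]]].
    by rewrite mem_filter => /andP[/eqP pj /sr]; rewrite dE pj mulr0 addr0.
  move: pP qN; rewrite !mem_filter /fm_combo => /andP[pj /sr hp] /andP[qj /sr hq].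
  move: hp hq; rewrite /= !dE dotvDl !dotvZl; nra.
pose bound p := (p.2 - dotv p.1 x) / p.1 0 j.
have [|r [Lr rU]] := @exists_between (map bound Neg) (map bound Pos).
  move=> _ _ /mapP[q qN ->] /mapP[p pP ->].
  have := sPN _ (allpairs_f (fm_combo j) pP qN).
  move: pP qN; rewrite !mem_filter /bound => /andP[pj _] /andP[qj _].
  rewrite /= dotvDl !dotvZl ler_ndivrMr // mulrAC ler_pdivrMr //; nra.
exists r => p ps; rewrite dE.
case: (ltgtP (p.1 0 j) 0) => pj.
- have /map_f /Lr : p \in Neg by rewrite mem_filter pj ps.
  by rewrite ler_ndivrMr //; lra.
- have /map_f /rU : p \in Pos by rewrite mem_filter pj ps.
  by rewrite ler_pdivlMr //; lra.
- by rewrite pj mulr0 addr0; apply: s0; rewrite mem_filter pj eqxx.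
Qed.

Lemma fourier_motzkin n (js : seq 'I_n) (s : seq ('rV[R]_n * R)) :
  exists s', forall x, sat s' x <->
    exists r : 'rV[R]_n, (forall i, i \notin js -> r 0 i = 0) /\ sat s (x + r).
Proof.
elim: js s => [|j js IH] s.
  exists s => x; split=> [sx|[r [r0 sr]]]; first by exists 0; split=> [i _|]; rewrite ?mxE ?addr0.
  suff r_eq0 : r = 0 by rewrite r_eq0 addr0 in sr.
  by apply/matrixP => a i; rewrite ord1 mxE r0.
have [s0 s0E] := fourier_motzkin_step s j.
have [s' s'E] := IH s0.
exists s' => x; split.
  move=> /s'E [r [rjs /s0E [rho sr]]].
  exists (r + rho *: delta_mx 0 j); split; last by rewrite addrA.
  move=> i; rewrite inE negb_or => /andP[ij ijs].
  by rewrite !mxE rjs // (negbTE ij) andbF mulr0 addr0.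
move=> [r [rjs sr]]; apply/s'E.
exists (r - r 0 j *: delta_mx 0 j); split; last by apply/s0E; exists (r 0 j); rewrite -addrA subrK.
move=> i ijs; rewrite !mxE eqxx /=.
have [->|ij] := eqVneq i j; first by rewrite mulr1 subrr.
by rewrite mulr0 subr0 rjs // inE negb_or ij.
Qed.

Lemma hpolyhedron_proj l d (W : set 'rV[R]_(l + d)) :
  hpolyhedron W -> hpolyhedron [set x | exists u, W (row_mx u x)].
Proof.
move=> [s ->].
have [s' s'E] := fourier_motzkin [seq lshift d i | i <- enum 'I_l] s.
exists [seq (rsubmx p.1, p.2) | p <- s'].
have dotv_rsub (c : 'rV[R]_(l + d)) x : dotv (rsubmx c) x = dotv c (row_mx 0 x).
  by rewrite -{2}(hsubmxK c) dotv_row_mx dotv0r add0r.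
apply/seteqP; split => x /=.
  move=> [u su]; apply/sat_map => p /= ps; rewrite dotv_rsub; move: p ps.
  apply/s'E; exists (row_mx u 0); rewrite add_row_mx add0r addr0; split=> // i.
  case: (splitP i) => [i' ii'|i' ii'].
    have -> : i = lshift d i' by apply/val_inj.
    by rewrite map_f ?mem_enum.
  have -> : i = rshift l i' by apply/val_inj.
  by rewrite row_mxEr mxE.
move=> /sat_map sx.
have /s'E [r [rjs sr]] : sat s' (row_mx 0 x) by move=> p /sx; rewrite dotv_rsub.
exists (lsubmx r); suff <- : row_mx 0 x + r = row_mx (lsubmx r) x by [].
rewrite -{1}(hsubmxK r) add_row_mx add0r; congr row_mx.
apply/matrixP => a i; rewrite ord1 !mxE rjs ?addr0 //.
by apply/mapP => -[k _ /(congr1 val) /= ik]; move: (ltn_ord k); rewrite -ik ltnNge leq_addr.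
Qed.

End FourierMotzkin.

Definition orthant {R : realType} n : set 'rV[R]_n := [set x | forall i, 0 <= x 0 i].
Arguments orthant {R} n.

Section Descriptions.
Variable R : realType.

Lemma forall_split_ord m1 m2 (P : 'I_(m1 + m2) -> Prop) :
  (forall i, P i) <-> (forall i, P (lshift m2 i)) /\ (forall i, P (rshift m1 i)).
Proof.
split=> [Pi|[Pl Pr] i]; first by split=> i; apply: Pi.
case: (splitP i) => j ij.
  by have -> : i = lshift m2 j by apply/val_inj.
by have -> : i = rshift m1 j by apply/val_inj.
Qed.

Lemma orthant_row_mx m1 m2 (a : 'rV[R]_m1) (b : 'rV[R]_m2) :
  orthant (m1 + m2) (row_mx a b) <-> orthant m1 a /\ orthant m2 b.
Proof.
split=> [/forall_split_ord [al br]|[a0 b0]].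
  by split=> i; [have := al i; rewrite row_mxEl|have := br i; rewrite row_mxEr].
by apply/forall_split_ord; split=> i; rewrite ?row_mxEl ?row_mxEr.
Qed.

Lemma has_descr_ineqs l m (A : 'M[R]_(l, m)) (b : 'rV[R]_m) :
  has_descr [set y | forall i, (y *m A) 0 i <= b 0 i] m.
Proof.
exists 0%N, A, b, 0, 0; apply/seteqP; split=> y /= => [yA|[]//].
by rewrite mulmx0.
Qed.

Lemma has_descr_eq l k (E : 'M[R]_(l, k)) (e : 'rV[R]_k) :
  has_descr [set y | y *m E = e] 0.
Proof.
exists k, 0, 0, E, e; apply/seteqP; split=> y /= => [->|[]//].
by split=> // -[].
Qed.

Lemma has_descr_set0 l : has_descr (set0 : set 'rV[R]_l) 0.
Proof.
suff -> : set0 = [set y : 'rV[R]_l | y *m 0 = const_mx 1 :> 'rV[R]_1].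
  exact: has_descr_eq.
apply/seteqP; split=> y //=; rewrite mulmx0 => /matrixP /(_ 0 0).
by rewrite !mxE => /eqP; rewrite eq_sym oner_eq0.
Qed.

Lemma has_descr_setI l (Q1 Q2 : set 'rV[R]_l) m1 m2 :
  has_descr Q1 m1 -> has_descr Q2 m2 -> has_descr (Q1 `&` Q2) (m1 + m2).
Proof.
move=> [k1 [A1 [b1 [E1 [e1 ->]]]]] [k2 [A2 [b2 [E2 [e2 ->]]]]].
exists (k1 + k2)%N, (row_mx A1 A2), (row_mx b1 b2), (row_mx E1 E2), (row_mx e1 e2).
apply/seteqP; split=> y /=; rewrite !mul_mx_row.
  move=> [[yA1 ->] [yA2 ->]]; split=> //.
  by apply/forall_split_ord; split=> i; rewrite ?row_mxEl ?row_mxEr.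
move=> [/forall_split_ord [yA1 yA2] /eq_row_mx [yE1 yE2]].
by split; split=> // i; [have := yA1 i; rewrite !row_mxEl|have := yA2 i; rewrite !row_mxEr].
Qed.

Lemma has_descr_orthant n : has_descr (@orthant R n) n.
Proof.
suff -> : @orthant R n = [set y | forall i, (y *m - 1%:M) 0 i <= (0 : 'rV[R]_n) 0 i].
  exact: has_descr_ineqs.
by apply/seteqP; split=> y /= y0 i; have := y0 i; rewrite mulmxN mulmx1 !mxE oppr_le0.
Qed.

Lemma has_descr_unit_cube d : has_descr (@unit_cube R d) (d + d).
Proof.
suff -> : @unit_cube R d = [set y | forall i, (y *m 1%:M) 0 i <= (const_mx 1 : 'rV[R]_d) 0 i]
    `&` orthant d.
  by apply: has_descr_setI; [apply: has_descr_ineqs|apply: has_descr_orthant].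
apply/seteqP; split=> y /=; rewrite mulmx1.
  by move=> yc; split=> i; case/andP: (yc i); rewrite ?mxE.
by move=> [y1 y0] i; rewrite y0 /=; have := y1 i; rewrite mxE.
Qed.

Lemma has_descr_preimage n l (Q : set 'rV[R]_l) m (L : 'M[R]_(n, l)) (c : 'rV[R]_l) :
  has_descr Q m -> has_descr [set w | Q (w *m L + c)] m.
Proof.
move=> [k [A [b [E [e ->]]]]].
exists k, (L *m A), (b - c *m A), (L *m E), (e - c *m E).
have addE (u v : 'rV[R]_m) i : (u + v) 0 i = u 0 i + v 0 i by rewrite mxE.
have subE (u v : 'rV[R]_m) i : (u - v) 0 i = u 0 i - v 0 i by rewrite !mxE.
apply/seteqP; split=> w /=; rewrite !mulmxDl !mulmxA.
  move=> [wA <-]; rewrite addrK; split=> // i.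
  by rewrite subE lerBrDr -addE wA.
move=> [wA wE]; rewrite wE subrK; split=> // i.
by have := wA i; rewrite subE lerBrDr -addE.
Qed.

Lemma has_descr_sat l (s : seq ('rV[R]_l * R)) : has_descr [set x | sat s x] (size s).
Proof.
elim: s => [|p s IH].
  suff -> : [set x : 'rV[R]_l | sat [::] x] =
      [set y | forall i, (y *m 0) 0 i <= (0 : 'rV[R]_0) 0 i].
    exact: has_descr_ineqs.
  by apply/seteqP; split=> y // _ [].
have halfspace : has_descr [set x | dotv p.1 x <= p.2] 1.
  suff -> : [set x | dotv p.1 x <= p.2] =
      [set y | forall i, (y *m p.1^T) 0 i <= (const_mx p.2 : 'rV[R]_1) 0 i].
    exact: has_descr_ineqs.
  have yc y : (y *m p.1^T) 0 0 = dotv p.1 y.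
    by rewrite mxE; apply: eq_bigr => i _; rewrite mxE mulrC.
  apply/seteqP; split=> y /= => [py i|/(_ 0)]; first by rewrite [i]ord1 yc mxE.
  by rewrite yc mxE.
suff -> : [set x | sat (p :: s) x] = [set x | dotv p.1 x <= p.2] `&` [set x | sat s x].
  by rewrite /= -[(size s).+1]add1n; apply: has_descr_setI.
apply/seteqP; split=> y /= => [sy|[py sy] q].
  by split=> [|q qs]; apply: sy; rewrite inE ?eqxx ?qs ?orbT.
by rewrite inE => /orP[/eqP->|/sy].
Qed.

Lemma hpolyhedron_descr l (Q : set 'rV[R]_l) m : has_descr Q m -> hpolyhedron Q.
Proof.
move=> [k [A [b [E [e ->]]]]].
exists ([seq (colv i A, b 0 i) | i <- enum 'I_m] ++
  [seq (colv i E, e 0 i) | i <- enum 'I_k] ++ [seq (- colv i E, - e 0 i) | i <- enum 'I_k]).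
apply/seteqP; split=> y /=.
  move=> [yA yE]; apply/sat_cat; split; [|apply/sat_cat; split];
    by apply/sat_map => i _ /=; rewrite ?dotvNl dotv_colv ?yE.
move=> /sat_cat [/sat_map yA /sat_cat [/sat_map yE1 /sat_map yE2]]; split=> [i|].
  by have := yA i (mem_enum _ i); rewrite /= dotv_colv.
apply/matrixP => a i; rewrite ord1; apply/eqP; rewrite eq_le.
have := yE1 i (mem_enum _ i); have := yE2 i (mem_enum _ i).
by rewrite /= dotvNl !dotv_colv lerN2 => -> ->.
Qed.

Lemma is_polyhedron_aff_image l d (Q : set 'rV[R]_l) (T : 'M[R]_(l, d)) t :
  is_polyhedron Q -> is_polyhedron (aff_image T t Q).
Proof.
move=> [m Qm].
pose G := [set w : 'rV[R]_(l + d) | Q (w *m col_mx 1%:M 0 + 0)] `&`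
  [set w | w *m col_mx (- T) 1%:M = t].
have /hpolyhedron_descr /hpolyhedron_proj [s sE] : has_descr G (m + 0).
  by apply: has_descr_setI; [apply: has_descr_preimage|apply: has_descr_eq].
exists (size s); rewrite (_ : aff_image T t Q = [set x | exists u, G (row_mx u x)]).
  by rewrite sE; apply: has_descr_sat.
apply/seteqP; split=> x /=; rewrite /G /=.
  move=> [y Qy <-]; exists y; rewrite !mul_row_col mulmx0 !mulmx1 !addr0 mulmxN.
  by rewrite addrA addNr add0r.
move=> [y []]; rewrite !mul_row_col mulmx0 !mulmx1 !addr0 mulmxN => Qy yx.
by exists y; rewrite // -yx addrA subrr add0r.
Qed.

Lemma num_facets_le l (Q : set 'rV[R]_l) m : has_descr Q m -> (num_facets Q <= m%:R%:E)%E.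
Proof. by move=> Qm; apply: ereal_inf_lbound; exists m. Qed.

Lemma xc_aff_image_le l d (Q : set 'rV[R]_l) (T : 'M[R]_(l, d)) t m :
  has_descr Q m -> (xc (aff_image T t Q) <= m%:R%:E)%E.
Proof.
move=> Qm; apply: le_trans (num_facets_le Qm).
by apply: ereal_inf_lbound; exists l, Q, T, t; split=> //; exists m.
Qed.

Lemma xc_set0 d : (xc (set0 : set 'rV[R]_d) <= 0%:E)%E.
Proof.
rewrite -(image_set0 (fun y : 'rV[R]_0 => y *m 0 + 0)).
exact: (xc_aff_image_le _ _ (has_descr_set0 0)).
Qed.

End Descriptions.

Section UpHull.
Variable R : realType.

Lemma up_hull_subset d (S S' : set 'rV[R]_d) : S `<=` S' -> up_hull S `<=` up_hull S'.
Proof. by move=> SS' x [p /SS' S'p px]; exists p. Qed.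

Lemma up_hull_sub_up_hull_cube d (S : set 'rV[R]_d) :
  S `<=` @unit_cube R d -> up_hull S `<=` up_hull (up_hull S `&` @unit_cube R d).
Proof.
move=> Scube x [p Sp px]; have pc := Scube p Sp.
exists (\row_i Num.min (x 0 i) 1) => [|i]; last by rewrite mxE ge_min lexx.
split=> [|i]; first by exists p => // i; rewrite mxE le_min px; case/andP: (pc i).
rewrite mxE le_min ge_min lexx orbT ler01 !andbT.
by case/andP: (pc i) => p0 _; apply: le_trans p0 (px i).
Qed.

Lemma up_hull_sub_scale d (S P : set 'rV[R]_d) (a : R) : 0 < a ->
  (forall x, S x -> up_hull P (a^-1 *: x)) -> up_hull S `<=` scale_set a (up_hull P).
Proof.
move=> a0 SP x [s /SP [p Pp ps] sx].
exists (a^-1 *: x); last by rewrite scalerA divff ?scale1r ?gt_eqF.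
exists p => // i; apply: le_trans (ps i) _.
by rewrite !mxE ler_pM2l ?invr_gt0.
Qed.

Lemma up_hull_cube_image_descr l d (Q : set 'rV[R]_l) (T : 'M[R]_(l, d)) t m :
  has_descr Q m -> exists Q' : set 'rV[R]_(l + d), has_descr Q' (m + (d + d) + d) /\
    up_hull (aff_image T t Q `&` @unit_cube R d) = aff_image (col_mx T 1%:M) t Q'.
Proof.
move=> Qm.
exists ([set w | Q (w *m col_mx 1%:M 0 + 0)] `&` [set w | @unit_cube R d (w *m col_mx T 0 + t)]
  `&` [set w | orthant d (w *m col_mx 0 1%:M + 0)]).
split.
  by do 2?apply: has_descr_setI; apply: has_descr_preimage;
    [|apply: has_descr_unit_cube|apply: has_descr_orthant].
apply/seteqP; split=> x /=.
  move=> [a [[y Qy <-] ya] ax]; exists (row_mx y (x - (y *m T + t))).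
    rewrite /= !mul_row_col !mulmx0 !mulmx1 !addr0 !add0r; split=> // i.
    by have := ax i; rewrite !mxE subr_ge0.
  by rewrite mul_row_col mulmx1 addrAC addrC subrK.
move=> [w [[Qw cw] ow] <-]; rewrite -(hsubmxK w) in Qw cw ow *.
move: Qw cw ow; rewrite /= !mul_row_col !mulmx0 !mulmx1 !addr0 !add0r => Qw cw ow.
exists (lsubmx w *m T + t); first by split=> //; exists (lsubmx w).
by move=> i; rewrite addrAC [leRHS]mxE lerDl ow.
Qed.

Lemma zero_one_vec_bound d (v : 'rV[R]_d) i : zero_one_vec v -> 0 <= v 0 i <= 1.
Proof. by move=> /(_ i) [->|->]; rewrite lexx ?ler01. Qed.

Lemma conv_hull_sub_cube d (V : seq 'rV[R]_d) :
  (forall v, v \in V -> zero_one_vec v) -> conv_hull V `<=` @unit_cube R d.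
Proof.
move=> V01 x [lam [lam0 [lam1 ->]]] i.
have Vb (j : 'I_(size V)) := zero_one_vec_bound i (V01 _ (mem_nth 0 (ltn_ord j))).
rewrite summxE; apply/andP; split.
  by apply: sumr_ge0 => j _; rewrite mxE mulr_ge0 //; case/andP: (Vb j).
rewrite -lam1; apply: ler_sum => j _; rewrite mxE.
by rewrite -[leRHS]mulr1 ler_wpM2l //; case/andP: (Vb j).
Qed.

Lemma conv_hull_mem d (V : seq 'rV[R]_d) v : v \in V -> conv_hull V v.
Proof.
move=> vV; have jV : (index v V < size V)%N by rewrite index_mem.
pose j := Ordinal jV; rewrite -(nth_index 0 vV) -[index v V]/(val j).
exists (fun i => (i == j)%:R); split=> [i|]; first by rewrite ler0n.
split; first by rewrite (bigD1 j) //= eqxx big1 ?addr0 // => i /negbTE ->.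
by rewrite (bigD1 j) //= eqxx scale1r big1 ?addr0 // => i /negbTE ->; rewrite scale0r.
Qed.

Lemma is_polyhedron_up_hull_conv d (V : seq 'rV[R]_d) : is_polyhedron (up_hull (conv_hull V)).
Proof.
pose n := size V; pose Vm := \matrix_(j < n) nth 0 V j.
pose W := @orthant R (n + d) `&` [set w | w *m col_mx (const_mx 1) 0 = 1%:M].
have VmE (lam : 'rV[R]_n) : lam *m Vm = \sum_j lam 0 j *: nth 0 V j.
  by rewrite mulmx_sum_row; apply: eq_bigr => j _; rewrite rowK.
have sumE (lam : 'rV[R]_n) : lam *m const_mx 1 = (\sum_j lam 0 j)%:M.
  by apply/matrixP => a b; rewrite !ord1 !mxE mulr1n; apply: eq_bigr => j _; rewrite mxE mulr1.
suff -> : up_hull (conv_hull V) = aff_image (col_mx Vm 1%:M) 0 W.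
  apply: is_polyhedron_aff_image; exists (n + d + 0)%N.
  by apply: has_descr_setI; [apply: has_descr_orthant|apply: has_descr_eq].
apply/seteqP; split=> x /=.
  move=> [_ [lam [lam0 [lam1 ->]]] px].
  exists (row_mx (\row_j lam j) (x - \sum_j lam j *: nth 0 V j)).
    split; first by apply/orthant_row_mx; split=> i; rewrite !mxE ?subr_ge0 ?lam0 ?px.
    rewrite /= mul_row_col mulmx0 addr0 sumE -[1]lam1; congr (_%:M).
    by apply: eq_bigr => j _; rewrite mxE.
  rewrite mul_row_col mulmx1 addr0 VmE.
  rewrite (eq_bigr (fun j => lam j *: nth 0 V j)) => [|j _]; last by rewrite mxE.
  by rewrite addrC subrK.
move=> [w [w0 wsum] <-]; rewrite -(hsubmxK w) in w0 wsum *.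
move: w0 wsum => /orthant_row_mx [lam0 z0].
rewrite /= mul_row_col mulmx0 addr0 sumE => /matrixP /(_ 0 0); rewrite !mxE !mulr1n => lam1.
exists (lsubmx w *m Vm).
  by exists (fun j => lsubmx w 0 j); rewrite VmE.
by move=> i; rewrite mul_row_col mulmx1 addr0 [leRHS]mxE lerDl.
Qed.

Lemma up_hull_coef_ge0 d (S : set 'rV[R]_d) (c p : 'rV[R]_d) (del : R) :
  S p -> (forall u, up_hull S u -> del <= dotv c u) -> forall j, 0 <= c 0 j.
Proof.
move=> Sp valid j; rewrite leNgt; apply/negP => cj.
have cp : del <= dotv c p by apply: valid; exists p.
pose r := (dotv c p - del + 1) / - c 0 j.
have r0 : 0 <= r by apply: divr_ge0; lra.
have e : r * c 0 j = - (dotv c p - del + 1) by rewrite /r; field; rewrite lt_eqF.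
have : del <= dotv c (p + r *: delta_mx 0 j).
  by apply: valid; exists p => // i; rewrite !mxE lerDl mulr_ge0 ?ler0n.
rewrite dotvDr dotvZr dotv_deltar e; lra.
Qed.

Lemma up_hull_dotv_ge d (S : set 'rV[R]_d) (c : 'rV[R]_d) (del : R) :
  (forall i, 0 <= c 0 i) -> S `<=` [set x | del <= dotv c x] ->
  up_hull S `<=` [set x | del <= dotv c x].
Proof.
move=> c0 Sc x [p /Sc /= cp px]; apply: le_trans cp _.
by apply: ler_sum => i _; apply: ler_wpM2l.
Qed.

Lemma conv_hull_dotv_ge d (V : seq 'rV[R]_d) (c : 'rV[R]_d) (del : R) :
  (forall v, v \in V -> del <= dotv c v) -> conv_hull V `<=` [set x | del <= dotv c x].
Proof.
move=> Vc x [lam [lam0 [lam1 ->]]] /=.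
rewrite dotv_sumr -[del]mul1r -lam1 mulr_suml; apply: ler_sum => j _.
by rewrite dotvZr ler_wpM2l // Vc // mem_nth.
Qed.

Lemma dotv_min_zero_one d (c v : 'rV[R]_d) (del : R) :
  0 <= del -> (forall i, 0 <= c 0 i) -> zero_one_vec v -> del <= dotv c v ->
  del <= dotv (\row_i Num.min (c 0 i) del) v.
Proof.
move=> del0 c0 v01 cv.
have [[i [vi ci]]|nex] := pselect (exists i, v 0 i = 1 /\ del <= c 0 i).
  rewrite /dotv (bigD1 i) //= vi mulr1 mxE min_r // lerDl.
  apply: sumr_ge0 => k _; rewrite mxE mulr_ge0 ?le_min ?c0 //.
  by case/andP: (zero_one_vec_bound k v01).
suff <- : dotv c v = dotv (\row_i Num.min (c 0 i) del) v by [].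
apply: eq_bigr => i _; rewrite mxE.
case: (v01 i) => vi; rewrite vi ?mulr0 ?mulr1 // min_l // ltW // ltNge.
by apply/negP => ci; apply: nex; exists i.
Qed.

Lemma cube_dotv_bound d (c x : 'rV[R]_d) (del : R) :
  (forall i, 0 <= c 0 i <= del) -> unit_cube x -> 0 <= dotv c x <= d%:R * del.
Proof.
move=> cb xc; apply/andP; split.
  by apply: sumr_ge0 => i _; case/andP: (cb i) => c0 _; case/andP: (xc i) => x0 _; apply: mulr_ge0.
apply: (@le_trans _ _ (\sum_(i < d) del)); last by rewrite sumr_const card_ord mulr_natl.
by apply: ler_sum => i _; have /andP[c0 cd] := cb i; have /andP[x0 x1] := xc i; nra.
Qed.

End UpHull.

Section RelativeDistance.
Variable R : realType.

Lemma rd_ratio_gt (num den : \bar R) (r s D : R) :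
  0 <= r -> r * D < s -> (0 <= den)%E -> (den <= D%:E)%E -> (s%:E <= num)%E ->
  (r%:E < rd_ratio num den)%E.
Proof.
move=> r0 rDs; case: den => [D0| |] //; rewrite !lee_fin => D00 D0D sn.
have s0 : 0 < s by apply: le_lt_trans rDs; rewrite mulr_ge0 // (le_trans D00 D0D).
rewrite /rd_ratio; case: eqP => // _.
move: D00; rewrite le_eqVlt => /orP[/eqP <-|D0pos].
  rewrite eqxx; case: eqP => [num0|_]; last exact: ltry.
  by move: sn; rewrite num0 leNgt => /negP[]; exact: s0.
rewrite eqe gt_eqF //=.
apply: (@lt_le_trans _ _ (s%:E * (D0^-1)%:E)%E); last first.
  by apply: lee_wpmul2r; rewrite // lee_fin invr_ge0 ltW.
rewrite -EFinM lte_fin ltr_pdivlMr //; apply: le_lt_trans rDs.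
by rewrite ler_wpM2l.
Qed.

Lemma rdist_dotv_ge d (C A : set 'rV[R]_d) (c a0 : 'rV[R]_d) (r lo D : R) :
  0 <= r -> C a0 -> (rdist C A <= r%:E)%E ->
  (forall a, C a -> lo <= dotv c a) ->
  (forall a a', C a -> C a' -> `|dotv c a - dotv c a'| <= D) ->
  forall x, A x -> lo - r * D <= dotv c x.
Proof.
move=> r0 Ca0 rd lo_c width x Ax; rewrite leNgt; apply/negP => cx.
have num : ((lo - dotv c x)%:E <= rd_num C A c)%E.
  have Sx : [set ereal_inf [set `|dotv c b - dotv c a|%:E | a in C] | b in A]
      (ereal_inf [set `|dotv c x - dotv c a|%:E | a in C]) by exists x.
  apply: le_trans (ereal_sup_ubound Sx); apply/ereal_infP => _ [a Ca <-].
  by rewrite lee_fin ler_normr; apply/orP; right; have := lo_c a Ca; lra.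
have den0 : (0 <= rd_den C c)%E.
  by apply: ereal_sup_ubound; exists a0, a0; rewrite subrr normr0.
have denD : (rd_den C c <= D%:E)%E.
  by apply/ereal_supP => _ [a [a' [Ca [Ca' ->]]]]; rewrite lee_fin width.
have ratio_gt : (r%:E < rd_ratio (rd_num C A c) (rd_den C c))%E.
  by apply: (rd_ratio_gt r0 _ den0 denD num); lra.
move: rd; apply/negP; rewrite -ltNge; apply: lt_le_trans ratio_gt _.
by apply: ereal_sup_ubound; exists c.
Qed.

Lemma up_hull_conv_scaled_of_rdist d (V : seq 'rV[R]_d) (p : 'rV[R]_d) (eps : R)
    (A : set 'rV[R]_d) :
  (0 < d)%N -> (forall v, v \in V -> zero_one_vec v) -> conv_hull V p -> 0 < eps < 1 ->
  (rdist (up_hull (conv_hull V) `&` @unit_cube R d) A <= (eps / d%:R)%:E)%E ->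
  forall x, A x -> unit_cube x -> up_hull (conv_hull V) ((1 - eps)^-1 *: x).
Proof.
move=> d0 V01 Vp /andP[eps0 eps1] rd x Ax cx.
set P := conv_hull V; set C := up_hull P `&` @unit_cube R d.
set y := (1 - eps)^-1 *: x.
have [m /hpolyhedron_descr [s sE]] := is_polyhedron_up_hull_conv V.
rewrite sE; apply: contrapT => /existsNP [[c' del'] /not_implyP [cs /negP]].
rewrite -ltNge /= => violated.
set c := - c'; set del := - del'.
have valid u : up_hull P u -> del <= dotv c u.
  by rewrite sE => /(_ _ cs); rewrite dotvNl lerN2.
have cy : dotv c y < del by rewrite dotvNl ltrN2.
have c0 := up_hull_coef_ge0 Vp valid.
have y0 i : 0 <= y 0 i.
  by rewrite mxE; apply: mulr_ge0; [rewrite invr_ge0 subr_ge0 ltW|case/andP: (cx i)].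
have del0 : 0 < del by apply: le_lt_trans cy; apply: sumr_ge0 => i _; apply: mulr_ge0.
(* Truncating at [del] keeps the inequality valid on the 0/1 vertices and makes it
   vary by at most [d * del] on the cube. *)
pose ct := \row_i Num.min (c 0 i) del.
have ct_bound i : 0 <= ct 0 i <= del by rewrite mxE le_min c0 ltW // ge_min lexx orbT.
have ct_valid a : C a -> del <= dotv ct a.
  move=> [Pa _]; apply: up_hull_dotv_ge Pa => [i|]; first by case/andP: (ct_bound i).
  apply: conv_hull_dotv_ge => v vV.
  apply: dotv_min_zero_one => //; [exact: ltW|exact: V01|].
  by apply: valid; exists v => //; apply: conv_hull_mem.
have ct_width a a' : C a -> C a' -> `|dotv ct a - dotv ct a'| <= d%:R * del.
  move=> [_ /(cube_dotv_bound ct_bound) /andP[a0 a1]].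
  move=> [_ /(cube_dotv_bound ct_bound) /andP[a'0 a'1]].
  by rewrite ler_norml; apply/andP; split; lra.
have Cp : C p by split; [exists p|apply: conv_hull_sub_cube V01 p Vp].
have r0 : 0 <= eps / d%:R by rewrite divr_ge0 ?ler0n ?ltW.
have := rdist_dotv_ge r0 Cp rd ct_valid ct_width Ax.
have -> : eps / d%:R * (d%:R * del) = eps * del by field; rewrite pnatr_eq0 -lt0n.
have ct_y : dotv ct y <= dotv c y.
  by apply: ler_sum => i _; apply: ler_wpM2r => //; rewrite mxE ge_min lexx.
have ctx : dotv ct x = (1 - eps) * dotv ct y.
  by rewrite dotvZr mulrA divff ?mul1r // subr_eq0 gt_eqF.
have : (1 - eps) * dotv ct y < (1 - eps) * del.
  by rewrite ltr_pM2l ?subr_gt0 //; apply: le_lt_trans ct_y cy.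
lra.
Qed.

End RelativeDistance.

Theorem mainTheorem14 (R : realType) (d : nat) (P : set 'rV[R]_d) (eps M : R) :
  (0 < d)%N ->
  zero_one_polytope P ->
  0 < eps < 1 -> 0 < M ->
  (forall K : set 'rV[R]_d, is_polyhedron K ->
     up_hull P `<=` K -> K `<=` scale_set (1 - eps) (up_hull P) ->
     (M%:E <= xc K)%E) ->
  forall (l : nat) (Q : set 'rV[R]_l) (T : 'M[R]_(l, d)) (t : 'rV[R]_d),
    is_LEF (eps / d%:R) (up_hull P `&` @unit_cube R d) Q T t ->
    ((M - 3 * d%:R)%:E <= num_facets Q)%E.
Proof.
move=> d0 [V [V01 ->]] eps01 M0 xcK l Q T t [_ [CQ rd]].
have [[p Vp]|noV] := pselect (exists p, conv_hull V p); last first.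
  have up0 : up_hull (conv_hull V) = set0.
    by apply/seteqP; split=> // x [p Vp _]; apply: noV; exists p.
  have : (M%:E <= xc (set0 : set 'rV[R]_d))%E.
    by apply: xcK; rewrite ?up0 //; exists 0%N; apply: has_descr_set0.
  by move=> /le_trans /(_ (xc_set0 _ _)); rewrite lee_fin leNgt M0.
apply/ereal_infP => _ [m [Qm ->]].
have [Q' [Q'm KE]] := up_hull_cube_image_descr T t Qm.
have : (M%:E <= xc (up_hull (aff_image T t Q `&` @unit_cube R d)))%E.
  apply: xcK.
  - by rewrite KE; apply: is_polyhedron_aff_image; exists (m + (d + d) + d)%N.
  - apply: subset_trans (up_hull_sub_up_hull_cube (conv_hull_sub_cube V01)) _.
    by apply: up_hull_subset => x [Px cx]; split=> //; apply: CQ.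
  - apply: up_hull_sub_scale; first by case/andP: eps01 => _; rewrite subr_gt0.
    by move=> x [Ax cx]; apply: up_hull_conv_scaled_of_rdist d0 V01 Vp eps01 rd x Ax cx.
rewrite KE => /le_trans /(_ (xc_aff_image_le _ _ Q'm)).
by rewrite !lee_fin !natrD; lra.
Qed.
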